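(* Let $K$ be a field, $R$ a connected $\mathbb N$-graded $K$-algebra, and let $A$ be a graded double Ore extension of $R$ with generators $x_1,x_2$, relation $x_2x_1=p_{12}x_1x_2+p_{11}x_1^2+\tau_1x_1+\tau_2x_2+\tau_0$, and maps $\sigma=(\sigma_{ij})$, $\delta$. Then $A$ is a graded skew PBW extension of $R$ (in $x_1,x_2$) if and only if $p_{12}\neq0$, $p_{11}=0$, $\sigma_{11}$ and $\sigma_{22}$ are automorphisms of $R$, and $\sigma_{12}(r)=\sigma_{21}(r)=0$ for all $r\in R$.
   Context: A graded algebra is connected if its degree-zero part is $K$. A $K$-algebra $B\supseteq R$ is a right double Ore extension of $R$ if it is generated by $R$ and $x_1,x_2$; $x_2x_1=p_{12}x_1x_2+p_{11}x_1^2+\tau_1x_1+\tau_2x_2+\tau_0$ with $p_{12},p_{11}\in K$, $\tau_i\in R$; $B$ is a free left $R$-module with basis $\{x_1^ax_2^b\}_{a,b\ge0}$; and $x_1R+x_2R\subseteq Rx_1+Rx_2+R$. The maps are defined by $x_ir=\sigma_{i1}(r)x_1+\sigma_{i2}(r)x_2+\delta_i(r)$. A left double Ore extension: generated by $R$ and $x_1,x_2$, $x_1x_2=p'_{12}x_2x_1+p'_{11}x_1^2+x_1\tau'_1+x_2\tau'_2+\tau'_0$ ($p'\in K$, $\tau'\in R$), free right $R$-module with basis $\{x_1^ax_2^b\}$, and $x_1R+x_2R\subseteq Rx_1+Rx_2+R$. A double Ore extension is both, with the same generators. Graded means all relations are homogeneous with $\deg x_1=\deg x_2=1$. A ring $A$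 is a skew PBW extension of $R$ in $x_1,\dots,x_n$ if $R\subseteq A$; $A$ is a free left $R$-module on the monomials $x_1^{\alpha_1}\cdots x_n^{\alpha_n}$; for each $i$ and $r\ne0$ there is $c_{i,r}\in R\setminus\{0\}$ with $x_ir-c_{i,r}x_i\in R$; for all $i,j$ there is $c_{i,j}\in R\setminus\{0\}$ with $x_jx_i-c_{i,j}x_ix_j\in R+Rx_1+\cdots+Rx_n$; then $x_ir=\sigma_i(r)x_i+\delta_i(r)$ with $\sigma_i$ injective endomorphism, $\delta_i$ a $\sigma_i$-derivation. Bijective: all $\sigma_i$ bijective and $c_{i,j}$ invertible. Graded skew PBW extension: bijective, $R$ $\mathbb N$-graded, $\sigma_i$ graded, $\delta_i(R_m)\subseteq R_{m+1}$, $x_jx_i-c_{i,j}x_ix_j\in R_2+R_1x_1+\cdots+R_1x_n$ with $c_{i,j}\in R_0$. *)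

From HB Require Import structures.
From mathcomp Require Import all_boot all_order all_algebra.
Set Implicit Arguments. Unset Strict Implicit. Unset Printing Implicit Defensive.
Import GRing.Theory.
Local Open Scope ring_scope.

(* Throughout: K a field, A a K-algebra ([algType K], scalars central),
   R a sub-K-algebra of A given as a predicate [R : A -> Prop],
   and [Rg n] its homogeneous component of degree n. *)

Section Defs.
Variables (K : fieldType) (A : algType K).

Definition is_subalgebra (R : A -> Prop) : Prop :=
  [/\ R 1,
      forall r s, R r -> R s -> R (r + s),
      forall r s, R r -> R s -> R (r * s)
    & forall (k : K) r, R r -> R (k *: r)].

Definition connected_graded (R : A -> Prop) (Rg : nat -> A -> Prop) : Prop :=
  [/\ is_subalgebra R,
      forall n, [/\ (forall r, Rg n r -> R r),
                    Rg n 0,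
                    forall r s, Rg n r -> Rg n s -> Rg n (r + s)
                  & forall (k : K) r, Rg n r -> Rg n (k *: r)],
      forall m n r s, Rg m r -> Rg n s -> Rg (m + n)%N (r * s),
      (forall r, R r -> exists (N : nat) (c : nat -> A),
                (forall n, Rg n (c n)) /\ r = \sum_(n < N) c n) /\
      (forall (N : nat) (c : nat -> A), (forall n, Rg n (c n)) ->
                \sum_(n < N) c n = 0 -> forall n, (n < N)%N -> c n = 0)
    & forall r, Rg 0%N r <-> exists k : K, r = k%:A].

Definition left_free_basis (R : A -> Prop) (x1 x2 : A) : Prop :=
  (forall y : A, exists (N : nat) (c : nat -> nat -> A),
      (forall a b, R (c a b)) /\
      y = \sum_(a < N) \sum_(b < N) c a b * (x1 ^+ a * x2 ^+ b)) /\
  (forall (N : nat) (c : nat -> nat -> A), (forall a b, R (c a b)) ->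
      \sum_(a < N) \sum_(b < N) c a b * (x1 ^+ a * x2 ^+ b) = 0 ->
      forall a b, (a < N)%N -> (b < N)%N -> c a b = 0).

Definition right_free_basis (R : A -> Prop) (x1 x2 : A) : Prop :=
  (forall y : A, exists (N : nat) (c : nat -> nat -> A),
      (forall a b, R (c a b)) /\
      y = \sum_(a < N) \sum_(b < N) (x1 ^+ a * x2 ^+ b) * c a b) /\
  (forall (N : nat) (c : nat -> nat -> A), (forall a b, R (c a b)) ->
      \sum_(a < N) \sum_(b < N) (x1 ^+ a * x2 ^+ b) * c a b = 0 ->
      forall a b, (a < N)%N -> (b < N)%N -> c a b = 0).

(* Graded right double Ore extension of R in A with generators x1, x2, relation
   x2 x1 = p12 x1 x2 + p11 x1^2 + tau1 x1 + tau2 x2 + tau0, and maps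
   x_i r = sigma_i1(r) x1 + sigma_i2(r) x2 + delta_i(r)  (r in R).
   (Generation by R, x1, x2 follows from the spanning part of the basis.)
   Gradedness (deg x1 = deg x2 = 1, homogeneous relations): tau1, tau2 in R_1,
   tau0 in R_2, sigma_ij(R_m) <= R_m, delta_i(R_m) <= R_(m+1). *)
Definition graded_right_double_ore (R : A -> Prop) (Rg : nat -> A -> Prop)
    (x1 x2 : A) (p12 p11 : K) (tau1 tau2 tau0 : A)
    (s11 s12 s21 s22 d1 d2 : A -> A) : Prop :=
  [/\ R tau1 /\ R tau2 /\ R tau0,
      x2 * x1 = p12 *: (x1 * x2) + p11 *: (x1 ^+ 2) + tau1 * x1 + tau2 * x2 + tau0,
      left_free_basis R x1 x2,
      (forall r, R r ->
        [/\ R (s11 r), R (s12 r), R (d1 r) &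
            x1 * r = s11 r * x1 + s12 r * x2 + d1 r]) /\
      (forall r, R r ->
        [/\ R (s21 r), R (s22 r), R (d2 r) &
            x2 * r = s21 r * x1 + s22 r * x2 + d2 r])
    & (Rg 1%N tau1 /\ Rg 1%N tau2 /\ Rg 2%N tau0) /\
      (forall m r, Rg m r ->
        [/\ Rg m (s11 r), Rg m (s12 r), Rg m (s21 r), Rg m (s22 r) &
            Rg m.+1 (d1 r) /\ Rg m.+1 (d2 r)])].

Definition graded_left_double_ore (R : A -> Prop) (Rg : nat -> A -> Prop)
    (x1 x2 : A) : Prop :=
  exists (q12 q11 : K) (t1 t2 t0 : A),
  [/\ R t1 /\ R t2 /\ R t0,
      x1 * x2 = q12 *: (x2 * x1) + q11 *: (x1 ^+ 2) + x1 * t1 + x2 * t2 + t0,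
      right_free_basis R x1 x2,
      forall r, R r -> (exists s1 s2 s0, [/\ R s1, R s2, R s0 &
                          x1 * r = s1 * x1 + s2 * x2 + s0]) /\
                       (exists s1 s2 s0, [/\ R s1, R s2, R s0 &
                          x2 * r = s1 * x1 + s2 * x2 + s0])
    & Rg 1%N t1 /\ Rg 1%N t2 /\ Rg 2%N t0].

(* Graded double Ore extension: both, with the same generators; the data
   p12 p11 tau sigma delta are those of the right structure. *)
Definition graded_double_ore (R : A -> Prop) (Rg : nat -> A -> Prop)
    (x1 x2 : A) (p12 p11 : K) (tau1 tau2 tau0 : A)
    (s11 s12 s21 s22 d1 d2 : A -> A) : Prop :=
  graded_right_double_ore R Rg x1 x2 p12 p11 tau1 tau2 tau0 s11 s12 s21 s22 d1 d2
  /\ graded_left_double_ore R Rg x1 x2.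

Definition bijective_on (R : A -> Prop) (f : A -> A) : Prop :=
  [/\ forall r, R r -> R (f r),
      forall r s, R r -> R s -> f r = f s -> r = s
    & forall s, R s -> exists r, R r /\ f r = s].

Definition automorphism_on (R : A -> Prop) (f : A -> A) : Prop :=
  [/\ bijective_on R f,
      forall r s, R r -> R s -> f (r + s) = f r + f s,
      forall r s, R r -> R s -> f (r * s) = f r * f s,
      forall (k : K) r, R r -> f (k *: r) = k *: f r
    & f 1 = 1].

Definition gen (x1 x2 : A) (i : 'I_2) : A := if val i == 0%N then x1 else x2.

Definition graded_skew_PBW (R : A -> Prop) (Rg : nat -> A -> Prop)
    (x1 x2 : A) : Prop :=
  [/\
      left_free_basis R x1 x2,
      forall (i : 'I_2) r, R r -> r <> 0 ->
        exists c, [/\ R c, c <> 0 & R (gen x1 x2 i * r - c * gen x1 x2 i)],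
      exists (sig del : 'I_2 -> A -> A), forall i : 'I_2,
        [/\ forall r, R r -> [/\ R (sig i r), R (del i r) &
               gen x1 x2 i * r = sig i r * gen x1 x2 i + del i r],
            bijective_on R (sig i)
          & forall m r, Rg m r -> Rg m (sig i r) /\ Rg m.+1 (del i r)]
    &
      forall i j : 'I_2, exists c,
        [/\ R c, c <> 0, Rg 0%N c,
            exists d, [/\ R d, c * d = 1 & d * c = 1]
          & exists s0 s1 s2, [/\ Rg 2%N s0, Rg 1%N s1, Rg 1%N s2 &
              gen x1 x2 j * gen x1 x2 i - c * (gen x1 x2 i * gen x1 x2 j)
                = s0 + s1 * x1 + s2 * x2]]].

End Defs.

From Pilot Require Import Defs.
From HB Require Import structures.
From mathcomp Require Import all_boot all_order all_algebra.
Import GRing.Theory.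
Set Implicit Arguments. Unset Strict Implicit. Unset Printing Implicit Defensive.
Local Open Scope ring_scope.

(* Everything is read off from coordinates in the left R-basis x1^a x2^b.
   A relation x r = f(r) x + d(r) valid for all r in R forces f to be a
   K-algebra endomorphism of R: compare the x-coefficients of x (r + s),
   x (r s) = (x r) s, x (k r) and x 1.  If A is a skew PBW extension,
   comparing x_i r = sigma_i(r) x_i + delta_i(r) with the double Ore expansion
   of x_i r gives sigma_12 = sigma_21 = 0 and sigma_ii = sigma_i, and comparing
   x2 x1 - c x1 x2 in R_2 + R_1 x1 + R_1 x2, where c lies in R_0 = K, with the
   defining relation gives p11 = 0 and p12 = c <> 0.  Conversely, under these
   conditions x_i r = sigma_ii(r) x_i + delta_i(r), the relation becomes
   x2 x1 - p12 x1 x2 = tau0 + tau1 x1 + tau2 x2, and dividing it by p12 gives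
   the commutation rule for x1 x2. *)

Lemma alg_eq0 (K : fieldType) (A : algType K) (k : K) :
  (k%:A == 0 :> A) = (k == 0).
Proof. by rewrite scaler_eq0 oner_eq0 orbF. Qed.

Section Subalgebra.
Variables (K : fieldType) (A : algType K) (R : A -> Prop).
Hypothesis R_subalg : is_subalgebra R.

Lemma subalg_alg (k : K) : R k%:A.
Proof. by case: R_subalg => R1 _ _ RZ; apply: RZ. Qed.

Lemma subalg0 : R 0.
Proof. by rewrite -(scale0r 1); apply: subalg_alg. Qed.

Lemma subalgB r s : R r -> R s -> R (r - s).
Proof.
case: R_subalg => _ RD _ RZ Rr Rs.
by apply: RD => //; rewrite -scaleN1r; apply: RZ.
Qed.

Lemma automorphism_on_eq (f g : A -> A) :
  (forall r, R r -> f r = g r) -> automorphism_on R f -> automorphism_on R g.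
Proof.
case: R_subalg => R1 RD RM RZ fg [[fR f_inj f_surj] fD fM fZ f1].
split.
- split=> [r Rr | r s Rr Rs | s Rs]; first by rewrite -fg //; exact: fR.
  + by rewrite -!fg //; exact: f_inj.
  + by have [r [Rr <-]] := f_surj s Rs; exists r; rewrite fg.
- by move=> r s Rr Rs; rewrite -!fg ?fD //; exact: RD.
- by move=> r s Rr Rs; rewrite -!fg ?fM //; exact: RM.
- by move=> k r Rr; rewrite -!fg ?fZ //; exact: RZ.
- by rewrite -fg.
Qed.

Lemma automorphism_on_neq0 (f : A -> A) r :
  automorphism_on R f -> R r -> r <> 0 -> f r <> 0.
Proof.
move=> [[_ f_inj _] _ _ fZ _] Rr r_neq0 fr0; apply: r_neq0.
have f0 : f 0 = 0 by rewrite -(scale0r 1) fZ ?scale0r //; case: R_subalg.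
by apply: f_inj; rewrite ?fr0 //; exact: subalg0.
Qed.

End Subalgebra.

Section LeftFreeBasis.
Variables (K : fieldType) (A : algType K) (R : A -> Prop) (x1 x2 : A).
Hypotheses (R_subalg : is_subalgebra R) (x_free : left_free_basis R x1 x2).

Lemma left_free_coef_inj (N : nat) (c c' : nat -> nat -> A) :
  (forall a b, R (c a b)) -> (forall a b, R (c' a b)) ->
  \sum_(a < N) \sum_(b < N) c a b * (x1 ^+ a * x2 ^+ b) =
  \sum_(a < N) \sum_(b < N) c' a b * (x1 ^+ a * x2 ^+ b) ->
  forall a b, (a < N)%N -> (b < N)%N -> c a b = c' a b.
Proof.
move=> Rc Rc' E a b lt_a lt_b; apply/eqP; rewrite -subr_eq0; apply/eqP.
apply: x_free.2 (fun a b => c a b - c' a b) _ _ a b lt_a lt_b.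
  by move=> a' b'; apply: subalgB.
under eq_bigr do under eq_bigr do rewrite mulrBl.
by under eq_bigr do rewrite sumrB; rewrite sumrB E subrr.
Qed.

Definition quad_comb (c12 c11 c1 c2 c0 : A) : A :=
  c12 * (x1 * x2) + c11 * x1 ^+ 2 + c1 * x1 + c2 * x2 + c0.

Lemma quad_comb_inj (c12 c11 c1 c2 c0 c12' c11' c1' c2' c0' : A) :
  R c12 -> R c11 -> R c1 -> R c2 -> R c0 ->
  R c12' -> R c11' -> R c1' -> R c2' -> R c0' ->
  quad_comb c12 c11 c1 c2 c0 = quad_comb c12' c11' c1' c2' c0' ->
  [/\ c12 = c12', c11 = c11', c1 = c1', c2 = c2' & c0 = c0'].
Proof.
pose coef (c12 c11 c1 c2 c0 : A) (a b : nat) : A :=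
  match a, b with
  | 0, 0 => c0 | 1, 0 => c1 | 0, 1 => c2 | 2, 0 => c11 | 1, 1 => c12
  | _, _ => 0 end.
have coefR u12 u11 u1 u2 u0 : R u12 -> R u11 -> R u1 -> R u2 -> R u0 ->
    forall a b, R (coef u12 u11 u1 u2 u0 a b).
  move=> ? ? ? ? ? [|[|[|a]]] [|[|b]] //=; exact: subalg0.
have coef_sum u12 u11 u1 u2 u0 :
    \sum_(a < 3) \sum_(b < 3) coef u12 u11 u1 u2 u0 a b * (x1 ^+ a * x2 ^+ b)
    = quad_comb u12 u11 u1 u2 u0.
  rewrite /quad_comb !big_ord_recr !big_ord0 /= !mul0r !add0r !addr0.
  rewrite !expr0 !expr1 !mulr1 !mul1r.
  by rewrite !addrA [LHS](ACl (4*5*3*2*1)).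
move=> Rc12 Rc11 Rc1 Rc2 Rc0 Rc12' Rc11' Rc1' Rc2' Rc0' E.
have := left_free_coef_inj (N := 3) (coefR _ _ _ _ _ Rc12 Rc11 Rc1 Rc2 Rc0)
  (coefR _ _ _ _ _ Rc12' Rc11' Rc1' Rc2' Rc0').
rewrite !coef_sum => /(_ E) coefE.
by split; [exact: (coefE 1 1) | exact: (coefE 2 0) | exact: (coefE 1 0)
  | exact: (coefE 0 1) | exact: (coefE 0 0)].
Qed.

Lemma lin_comb_inj (c1 c2 c0 c1' c2' c0' : A) :
  R c1 -> R c2 -> R c0 -> R c1' -> R c2' -> R c0' ->
  c1 * x1 + c2 * x2 + c0 = c1' * x1 + c2' * x2 + c0' ->
  [/\ c1 = c1', c2 = c2' & c0 = c0'].
Proof.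
move=> Rc1 Rc2 Rc0 Rc1' Rc2' Rc0' E.
have R0 := subalg0 R_subalg.
have [] // := @quad_comb_inj 0 0 c1 c2 c0 0 0 c1' c2' c0'.
by rewrite /quad_comb !mul0r !add0r.
Qed.

Lemma gen_coef_inj (i : 'I_2) (a b a' b' : A) :
  R a -> R b -> R a' -> R b' ->
  a * gen x1 x2 i + b = a' * gen x1 x2 i + b' -> a = a'.
Proof.
have R0 := subalg0 R_subalg.
rewrite /gen; case: ifP => _ Ra Rb Ra' Rb' E.
- have [] // := @lin_comb_inj a 0 b a' 0 b'.
  by rewrite !mul0r !addr0.
- have [] // := @lin_comb_inj 0 a b 0 a' b'.
  by rewrite !mul0r !add0r.
Qed.

End LeftFreeBasis.

Section OreMap.
Variables (K : fieldType) (A : algType K) (R : A -> Prop) (y : A) (f d : A -> A).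
Hypotheses (R_subalg : is_subalgebra R)
  (y_coef_inj : forall a b a' b', R a -> R b -> R a' -> R b' ->
                  a * y + b = a' * y + b' -> a = a')
  (y_mulR : forall r, R r -> [/\ R (f r), R (d r) & y * r = f r * y + d r]).

Lemma ore_map_additive r s : R r -> R s -> f (r + s) = f r + f s.
Proof.
case: R_subalg => _ RD _ _ Rr Rs.
have [Rfr Rdr yr] := y_mulR Rr; have [Rfs Rds ys] := y_mulR Rs.
have [Rfrs Rdrs yrs] := y_mulR (RD _ _ Rr Rs).
apply: (y_coef_inj Rfrs Rdrs (RD _ _ Rfr Rfs) (RD _ _ Rdr Rds)).
by rewrite -yrs mulrDr yr ys mulrDl addrACA.
Qed.

Lemma ore_map_multiplicative r s : R r -> R s -> f (r * s) = f r * f s.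
Proof.
case: R_subalg => _ RD RM _ Rr Rs.
have [Rfr Rdr yr] := y_mulR Rr; have [Rfs Rds ys] := y_mulR Rs.
have [Rfrs Rdrs yrs] := y_mulR (RM _ _ Rr Rs).
apply: (y_coef_inj Rfrs Rdrs (RM _ _ Rfr Rfs)
  (RD _ _ (RM _ _ Rfr Rds) (RM _ _ Rdr Rs))).
by rewrite -yrs mulrA yr mulrDl -mulrA ys mulrDr mulrA addrA.
Qed.

Lemma ore_map_scalable (k : K) r : R r -> f (k *: r) = k *: f r.
Proof.
case: R_subalg => _ _ _ RZ Rr.
have [Rfr Rdr yr] := y_mulR Rr; have [Rfkr Rdkr ykr] := y_mulR (RZ k _ Rr).
apply: (y_coef_inj Rfkr Rdkr (RZ k _ Rfr) (RZ k _ Rdr)).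
by rewrite -ykr -scalerAr yr scalerDr scalerAl.
Qed.

Lemma ore_map1 : f 1 = 1.
Proof.
case: R_subalg => R1 _ _ _.
have [Rf1 Rd1 y1] := y_mulR R1.
apply: (y_coef_inj Rf1 Rd1 R1 (subalg0 R_subalg)).
by rewrite -y1 mulr1 mul1r addr0.
Qed.

Lemma ore_map_automorphism : Defs.bijective_on R f -> automorphism_on R f.
Proof.
split=> //; [exact: ore_map_additive | exact: ore_map_multiplicative
  | exact: ore_map_scalable | exact: ore_map1].
Qed.

End OreMap.

Section GradedDoubleOre.
Variables (K : fieldType) (A : algType K) (R : A -> Prop) (Rg : nat -> A -> Prop)
  (x1 x2 : A) (p12 p11 : K) (tau1 tau2 tau0 : A) (s11 s12 s21 s22 d1 d2 : A -> A).
Hypotheses (R_graded : connected_graded R Rg)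
  (A_ore : graded_right_double_ore R Rg x1 x2 p12 p11 tau1 tau2 tau0
             s11 s12 s21 s22 d1 d2).

Lemma skew_PBW_double_ore_conditions :
  graded_skew_PBW R Rg x1 x2 ->
  [/\ p12 != 0, p11 = 0, automorphism_on R s11, automorphism_on R s22
    & forall r, R r -> s12 r = 0 /\ s21 r = 0].
Proof.
case: R_graded => R_subalg Rg_comp _ _ _.
case: A_ore => [[Rt1 [Rt2 Rt0]] x21E x_free [x1R x2R] _].
move=> [_ _ [sigma [delta sigmaP]] commP].
have R0 := subalg0 R_subalg.
have sigma_aut i : automorphism_on R (sigma i).
  have [gen_mulR sigma_bij _] := sigmaP i.
  exact: ore_map_automorphism R_subalg (gen_coef_inj R_subalg x_free (i := i))
    gen_mulR sigma_bij.
have x1P r : R r -> s11 r = sigma ord0 r /\ s12 r = 0.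
  move=> Rr; have [R11 R12 Rd1 x1r] := x1R r Rr.
  have [gen_mulR _ _] := sigmaP ord0.
  have [Rsigma Rdelta x1r'] := gen_mulR r Rr.
  have [] // := lin_comb_inj R_subalg x_free R11 R12 Rd1 Rsigma R0 Rdelta.
  by rewrite -x1r mul0r addr0.
have x2P r : R r -> s22 r = sigma ord_max r /\ s21 r = 0.
  move=> Rr; have [R21 R22 Rd2 x2r] := x2R r Rr.
  have [gen_mulR _ _] := sigmaP ord_max.
  have [Rsigma Rdelta x2r'] := gen_mulR r Rr.
  have [] // := lin_comb_inj R_subalg x_free R21 R22 Rd2 R0 Rsigma Rdelta.
  by rewrite -x2r mul0r add0r.
have [c [Rc c_neq0 _ _ [s0 [s1 [s2 [Gs0 Gs1 Gs2 x21E']]]]]] := commP ord0 ord_max.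
have Rg_R n r : Rg n r -> R r by have [] := Rg_comp n; auto.
have [Rs0 Rs1 Rs2] := And3 (Rg_R _ _ Gs0) (Rg_R _ _ Gs1) (Rg_R _ _ Gs2).
have x21_quad :
    quad_comb x1 x2 c 0 s1 s2 s0 = quad_comb x1 x2 p12%:A p11%:A tau1 tau2 tau0.
  rewrite /quad_comb !mulr_algl -x21E.
  move/eqP: x21E'; rewrite subr_eq => /eqP ->.
  by rewrite mul0r addr0 [RHS](ACl (4*2*3*1)).
have [p12E p11E _ _ _] := quad_comb_inj R_subalg x_free Rc R0 Rs1 Rs2 Rs0
  (subalg_alg R_subalg p12) (subalg_alg R_subalg p11) Rt1 Rt2 Rt0 x21_quad.
split.
- by rewrite -(alg_eq0 A) -p12E; apply/eqP.
- by apply/eqP; rewrite -(alg_eq0 A) -p11E.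
- by apply: (automorphism_on_eq R_subalg _ (sigma_aut ord0)) => r /x1P[->].
- by apply: (automorphism_on_eq R_subalg _ (sigma_aut ord_max)) => r /x2P[->].
- by move=> r Rr; rewrite (x1P r Rr).2 (x2P r Rr).2.
Qed.

Hypotheses (p12_neq0 : p12 != 0) (p11_eq0 : p11 = 0)
  (s11_aut : automorphism_on R s11) (s22_aut : automorphism_on R s22)
  (s12_s21_eq0 : forall r, R r -> s12 r = 0 /\ s21 r = 0).

Let sigma (i : 'I_2) := if val i == 0%N then s11 else s22.
Let delta (i : 'I_2) := if val i == 0%N then d1 else d2.

Lemma gen_mulR (i : 'I_2) r : R r ->
  [/\ R (sigma i r), R (delta i r)
    & gen x1 x2 i * r = sigma i r * gen x1 x2 i + delta i r].
Proof.
case: A_ore => _ _ _ [x1R x2R] _ Rr; have [s12r s21r] := s12_s21_eq0 Rr.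
case: i => [[|[|//]] lt_i]; rewrite /sigma /delta /gen /=.
- by have [? ? ? ->] := x1R r Rr; rewrite s12r mul0r addr0.
- by have [? ? ? ->] := x2R r Rr; rewrite s21r mul0r add0r.
Qed.

Lemma sigma_automorphism (i : 'I_2) : automorphism_on R (sigma i).
Proof. by case: i => [[|[|//]] lt_i]. Qed.

Lemma sigma_delta_graded (i : 'I_2) m r :
  Rg m r -> Rg m (sigma i r) /\ Rg m.+1 (delta i r).
Proof.
case: A_ore => _ _ _ _ [_ Rg_sd] /Rg_sd[? ? ? ? [? ?]].
by case: i => [[|[|//]] lt_i].
Qed.

Lemma x2x1_commutation :
  x2 * x1 - p12%:A * (x1 * x2) = tau0 + tau1 * x1 + tau2 * x2.
Proof.
case: A_ore => _ -> _ _ _.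
rewrite p11_eq0 scale0r addr0 mulr_algl addrC !addrA addNr add0r.
by rewrite [LHS](ACl (3*1*2)).
Qed.

Lemma x1x2_commutation :
  x1 * x2 - p12^-1%:A * (x2 * x1)
    = (- p12^-1) *: tau0 + ((- p12^-1) *: tau1) * x1 + ((- p12^-1) *: tau2) * x2.
Proof.
have /eqP := x2x1_commutation; rewrite subr_eq => /eqP ->.
rewrite !mulr_algl scalerDr scalerA mulVf // scale1r opprD addrCA subrr addr0.
by rewrite -scaleNr !scalerDr -!scalerAl.
Qed.

Definition skew_commutation (y z : A) : Prop :=
  exists c, [/\ R c, c <> 0, Rg 0 c, exists d, [/\ R d, c * d = 1 & d * c = 1]
    & exists s0 s1 s2, [/\ Rg 2 s0, Rg 1 s1, Rg 1 s2
        & z * y - c * (y * z) = s0 + s1 * x1 + s2 * x2]].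

Lemma skew_commutation_scalar (y z : A) (k : K) (t0 t1 t2 : A) :
  k != 0 -> Rg 2 t0 -> Rg 1 t1 -> Rg 1 t2 ->
  z * y - k%:A * (y * z) = t0 + t1 * x1 + t2 * x2 -> skew_commutation y z.
Proof.
case: R_graded => R_subalg _ _ _ Rg0 k_neq0 Gt0 Gt1 Gt2 zyE.
have algK l : l != 0 -> l%:A * l^-1%:A = 1 :> A.
  by move=> l_neq0; rewrite mulr_algl scalerA mulfV // scale1r.
exists k%:A; split.
- exact: subalg_alg.
- by apply/eqP; rewrite alg_eq0.
- by apply/Rg0; exists k.
- exists k^-1%:A; split; [exact: subalg_alg | exact: algK |].
  by rewrite -{2}(invrK k) algK // invr_eq0.
- by exists t0, t1, t2.
Qed.

Lemma skew_commutation_refl (y : A) : skew_commutation y y.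
Proof.
have [_ Rg_comp _ _ _] := R_graded.
have [[_ Rg2_0 _ _] [_ Rg1_0 _ _]] := (Rg_comp 2%N, Rg_comp 1%N).
apply: (skew_commutation_scalar (k := 1) (t0 := 0) (t1 := 0) (t2 := 0)) => //.
  exact: oner_neq0.
by rewrite scale1r mul1r subrr !mul0r !addr0.
Qed.

Lemma skew_commutation_gen (i j : 'I_2) :
  skew_commutation (gen x1 x2 i) (gen x1 x2 j).
Proof.
have [_ Rg_comp _ _ _] := R_graded.
have [[_ _ _ Rg2_Z] [_ _ _ Rg1_Z]] := (Rg_comp 2%N, Rg_comp 1%N).
case: A_ore => _ _ _ _ [[Gt1 [Gt2 Gt0]] _].
case: i j => [[|[|//]] lt_i] [[|[|//]] lt_j]; rewrite /gen /=;
  try exact: skew_commutation_refl.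
- exact: skew_commutation_scalar p12_neq0 Gt0 Gt1 Gt2 x2x1_commutation.
- apply: skew_commutation_scalar _ _ _ _ x1x2_commutation; rewrite ?invr_eq0 //.
  + exact: Rg2_Z.
  + exact: Rg1_Z.
  + exact: Rg1_Z.
Qed.

Lemma double_ore_skew_PBW : graded_skew_PBW R Rg x1 x2.
Proof.
have [R_subalg _ _ _ _] := R_graded.
case: A_ore => _ _ x_free _ _.
split=> //.
- move=> i r Rr r_neq0; have [Rsigma Rdelta gen_r] := gen_mulR i Rr.
  exists (sigma i r); split=> //.
  + exact (automorphism_on_neq0 R_subalg (sigma_automorphism i) Rr r_neq0).
  + by rewrite gen_r addrAC subrr add0r.
- exists sigma, delta => i.
  split; [exact: gen_mulR | | exact: sigma_delta_graded].
  by case: (sigma_automorphism i).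
- exact: skew_commutation_gen.
Qed.

End GradedDoubleOre.

Theorem theorem3p8 (K : fieldType) (A : algType K)
  (R : A -> Prop) (Rg : nat -> A -> Prop) (x1 x2 : A) (p12 p11 : K)
  (tau1 tau2 tau0 : A) (s11 s12 s21 s22 d1 d2 : A -> A) :
  connected_graded R Rg ->
  graded_double_ore R Rg x1 x2 p12 p11 tau1 tau2 tau0 s11 s12 s21 s22 d1 d2 ->
  (graded_skew_PBW R Rg x1 x2 <->
   [/\ p12 != 0, p11 = 0, automorphism_on R s11, automorphism_on R s22
     & forall r, R r -> s12 r = 0 /\ s21 r = 0]).
Proof.
move=> R_graded [A_ore _]; split.
- exact: skew_PBW_double_ore_conditions R_graded A_ore.
- by case; exact: double_ore_skew_PBW R_graded A_ore.
Qed.
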